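(* Let $p,q\in\Bbbk^\times$ with $q\neq1$, and let $\Phi:A(q)\to A(p)$ be a graded isomorphism of type I. Then there are scalars $k_1,\dots,k_4,\ell_1,\dots,\ell_4\in\Bbbk$ with $k_1k_4-k_2k_3\neq0$ and $\ell_1\ell_4-\ell_2\ell_3\neq0$ such that $\Phi(a)=k_1a+k_2c$, $\Phi(b)=\ell_1b+\ell_2d$, $\Phi(c)=k_3a+k_4c$, $\Phi(d)=\ell_3b+\ell_4d$. If $k_1\neq0$ and $k_4\neq0$, then $p=q$.
   Context: $\Bbbk$ is an algebraically closed field of characteristic zero. Paths are written left to right; path algebras are graded by path length. Let $Q$ be the quiver with vertices $e_1,e_2$, arrows $a,c:e_1\to e_2$ and $b,d:e_2\to e_1$; $A(q)=\Bbbk Q/(ab-cd,\ ba-q\,dc)$. A graded isomorphism $\Phi:A(q)\to A(p)$ is an algebra isomorphism for which there is a permutation $\sigma$ of the vertices with $\Phi$ mapping the degree-$k$ part $e_uA(q)_ke_v$ onto $e_{\sigma(u)}A(p)_ke_{\sigma(v)}$ for all $k,u,v$. It is of type I if $\Phi(e_1)=e_1$ and $\Phi(e_2)=e_2$. *)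

From HB Require Import structures.
From mathcomp Require Import all_boot all_order all_algebra.
Set Implicit Arguments. Unset Strict Implicit. Unset Printing Implicit Defensive.
Import Order.TTheory GRing.Theory Num.Theory.
Local Open Scope ring_scope.

(* The quiver Q: vertices e1 (encoded false), e2 (encoded true);
   arrows a,c : e1 -> e2 and b,d : e2 -> e1.
   Every path is determined by its source vertex and, at each step, a choice
   between the two arrows leaving the current vertex:
   from e1: false = a, true = c ;  from e2: false = b, true = d.
   So a path is a pair (source, choices); (v, [::]) is the trivial path e_v.
   Paths are written left to right. *)
Definition path := (bool * seq bool)%type.

Definition psrc (x : path) : bool := x.1.
Definition ptgt (x : path) : bool := x.1 (+) odd (size x.2).
Definition plen (x : path) : nat := size x.2.

Definition vtx (v : bool) : path := (v, [::]).
Definition arr_a : path := (false, [:: false]).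
Definition arr_c : path := (false, [:: true]).
Definition arr_b : path := (true, [:: false]).
Definition arr_d : path := (true, [:: true]).

Section PathAlgebra.
Variable K : fieldType.

(* Elements of the path algebra KQ, given as formal finite linear
   combinations of paths; two formal sums represent the same element of KQ
   iff they have the same coefficient function [coef]. *)
Definition kQ := seq (K * path)%type.

Definition coef (x : kQ) (w : path) : K := \sum_(z <- x | z.2 == w) z.1.

Definition kQadd (x y : kQ) : kQ := x ++ y.
Definition kQscale (c : K) (x : kQ) : kQ := [seq (c * z.1, z.2) | z <- x].
Definition kQsub (x y : kQ) : kQ := kQadd x (kQscale (-1) y).
Definition kQmul (x y : kQ) : kQ :=
  flatten [seq [seq (z.1 * w.1, (z.2.1, z.2.2 ++ w.2.2))
               | w <- y & ptgt z.2 == psrc w.2] | z <- x].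
Definition kQpath (w : path) : kQ := [:: (1, w)].
Definition kQone : kQ := [:: (1, vtx false); (1, vtx true)].
Definition kQsum (s : seq kQ) : kQ := flatten s.

(* relations of A(q): ab - cd  and  ba - q dc *)
Definition rel (q : K) (i : bool) : kQ :=
  if i then [:: (1, (true, [:: false; false])); (- q, (true, [:: true; true]))]
  else [:: (1, (false, [:: false; false])); (-1, (false, [:: true; true]))].

Definition in_ideal (q : K) (x : kQ) : Prop :=
  exists s : seq (K * path * bool * path)%type,
    coef x =1 coef (kQsum [seq kQscale t.1.1.1
                           (kQmul (kQmul (kQpath t.1.1.2) (rel q t.1.2))
                                  (kQpath t.2)) | t <- s]).

Definition eqA (q : K) (x y : kQ) : Prop := in_ideal q (kQsub x y).

(* representatives of elements of e_u A_k e_v: combinations of paths of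
   length k from u to v *)
Definition homog (k : nat) (u v : bool) (x : kQ) : Prop :=
  all (fun z => [&& plen z.2 == k, psrc z.2 == u & ptgt z.2 == v]) x.

(* Phi : KQ -> KQ represents (via representatives) a map A(q) -> A(p);
   it is an isomorphism of K-algebras A(q) -> A(p). *)
Definition is_alg_iso (q p : K) (Phi : kQ -> kQ) : Prop :=
  (forall x y, eqA q x y -> eqA p (Phi x) (Phi y)) /\
  [/\
      (forall x y, eqA p (Phi (kQadd x y)) (kQadd (Phi x) (Phi y))),
      (forall c x, eqA p (Phi (kQscale c x)) (kQscale c (Phi x))),
      (forall x y, eqA p (Phi (kQmul x y)) (kQmul (Phi x) (Phi y))),
      eqA p (Phi kQone) kQone &
      ((forall x y, eqA p (Phi x) (Phi y) -> eqA q x y) /\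
       (forall y, exists x, eqA p (Phi x) y))].

Definition is_graded_iso (q p : K) (Phi : kQ -> kQ) : Prop :=
  is_alg_iso q p Phi /\
  exists sigma : bool -> bool, bijective sigma /\
    forall (k : nat) (u v : bool),
      (forall x, homog k u v x ->
         exists y, homog k (sigma u) (sigma v) y /\ eqA p (Phi x) y) /\
      (forall y, homog k (sigma u) (sigma v) y ->
         exists x, homog k u v x /\ eqA p (Phi x) y).

Definition type_I (p : K) (Phi : kQ -> kQ) : Prop :=
  eqA p (Phi (kQpath (vtx false))) (kQpath (vtx false)) /\
  eqA p (Phi (kQpath (vtx true))) (kQpath (vtx true)).

End PathAlgebra.

(* Both ideals are generated in degree 2, so degree 0 and 1 are untouched by the
   relations.  A type I graded isomorphism therefore maps the span of a, c (resp.
   b, d) isomorphically onto itself, which gives the two invertible matrices (k_i)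
   and (l_i).  Applying Phi to ab = cd and ba = q dc yields quadratic relations in
   A(p), and comparing their degree-2 coefficients with the only degree-2
   relations ab - cd and ba - p dc of A(p) forces, when k1 k4 <> 0, the matrices to
   be diagonal and then p = q. *)

From Pilot Require Import Defs.
From HB Require Import structures.
From mathcomp Require Import all_boot all_order all_algebra.
From mathcomp Require Import ring zify.
Import GRing.Theory.
Set Implicit Arguments. Unset Strict Implicit. Unset Printing Implicit Defensive.
Local Open Scope ring_scope.

Section Coefficients.
Variable K : fieldType.
Implicit Types (x y : kQ K) (w : Defs.path).

Lemma coef_nil w : coef ([::] : kQ K) w = 0.
Proof. by rewrite /coef big_nil. Qed.

Lemma coef_cons_pair c u x w : coef ((c, u) :: x) w = (u == w)%:R * c + coef x w.
Proof. by rewrite /coef big_cons /=; case: eqP; rewrite ?mul1r ?mul0r ?add0r. Qed.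

Lemma coef_cat x y w : coef (x ++ y) w = coef x w + coef y w.
Proof. by rewrite /coef big_cat. Qed.

Lemma coef_kQscale c x w : coef (kQscale c x) w = c * coef x w.
Proof. by rewrite /coef big_map mulr_sumr. Qed.

Lemma coef_kQsub x y w : coef (kQsub x y) w = coef x w - coef y w.
Proof. by rewrite coef_cat coef_kQscale mulN1r. Qed.

Lemma coef_kQpath u w : coef (kQpath K u) w = (u == w)%:R.
Proof. by rewrite coef_cons_pair coef_nil mulr1 addr0. Qed.

Lemma coef_kQsum (s : seq (kQ K)) w : coef (kQsum s) w = \sum_(x <- s) coef x w.
Proof.
elim: s => [|x s IH]; first by rewrite big_nil coef_nil.
by rewrite /= coef_cat IH big_cons.
Qed.

Lemma coef_indicator_sum x w : coef x w = \sum_(z <- x) z.1 * (z.2 == w)%:R.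
Proof. by rewrite /coef big_mkcond; apply: eq_bigr => z _; case: eqP; rewrite ?mulr1 ?mulr0. Qed.

Lemma coef_kQmul x y w : coef (kQmul x y) w =
  \sum_(z <- x) \sum_(v <- y)
     z.1 * v.1 * ((ptgt z.2 == psrc v.2) && ((z.2.1, z.2.2 ++ v.2.2) == w))%:R.
Proof.
elim: x => [|z x IH]; first by rewrite big_nil coef_nil.
rewrite big_cons -IH /kQmul /= coef_cat coef_indicator_sum big_map big_filter big_mkcond /=.
by congr (_ + _); apply: eq_bigr => v _; case: ifP; rewrite ?mulr0 ?mulrA.
Qed.

Lemma concat_eq_len2 (u v : Defs.path) s e1 e2 :
  ((ptgt u == psrc v) && ((u.1, u.2 ++ v.2) == (s, [:: e1; e2])) : nat) =
  ((u == (s, [::])) * (v == (s, [:: e1; e2]))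
   + (u == (s, [:: e1])) * (v == (~~ s, [:: e2]))
   + (u == (s, [:: e1; e2])) * (v == (s, [::])))%N.
Proof.
case: u v => [ub [|x1 [|x2 [|x3 ul]]]] [vb [|y1 [|y2 [|y3 vl]]]];
  rewrite /ptgt /psrc /= !xpair_eqE ?eqseq_cons ?andbF ?andbT ?muln0 //=;
  move: s e1 e2 => [] [] [];
  by repeat match goal with b : bool |- _ => case: b end.
Qed.

Lemma coef_kQmul_len2 x y s e1 e2 : coef (kQmul x y) (s, [:: e1; e2]) =
  coef x (s, [::]) * coef y (s, [:: e1; e2])
  + coef x (s, [:: e1]) * coef y (~~ s, [:: e2])
  + coef x (s, [:: e1; e2]) * coef y (s, [::]).
Proof.
rewrite coef_kQmul !coef_indicator_sum !big_distrl -!big_split /=; apply: eq_bigr => z _.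
rewrite !big_distrr -!big_split /=; apply: eq_bigr => v _.
rewrite concat_eq_len2 !natrD !natrM; ring.
Qed.

Definition homog_len (n : nat) x : bool := all (fun z => plen z.2 == n) x.

Lemma homog_len_kQmul x y m n :
  homog_len m x -> homog_len n y -> homog_len (m + n) (kQmul x y).
Proof.
move=> /allP hx /allP hy; apply/allP => e /flattenP [r /mapP [z zx ->]] /mapP [v].
rewrite mem_filter => /andP [_ vy] -> /=.
by rewrite /plen size_cat -!/(plen _) (eqP (hx z zx)) (eqP (hy v vy)).
Qed.

Lemma homog_len_kQscale c x n : homog_len n x -> homog_len n (kQscale c x).
Proof. by rewrite /homog_len all_map. Qed.

Lemma coef_outside (P : pred Defs.path) x w :
  all (fun z => P z.2) x -> ~~ P w -> coef x w = 0.
Proof.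
move=> /allP hx hw; rewrite /coef big1_seq // => z /andP [/eqP zw zx].
by move: (hx z zx); rewrite zw (negbTE hw).
Qed.

Lemma coef_homog_len x n w : homog_len n x -> plen w != n -> coef x w = 0.
Proof. exact: (coef_outside (P := fun w => plen w == n)). Qed.

Lemma coef_homog k u v x w :
  homog k u v x -> ~~ [&& plen w == k, psrc w == u & ptgt w == v] -> coef x w = 0.
Proof. exact: (coef_outside (P := fun w => [&& plen w == k, psrc w == u & ptgt w == v])). Qed.

End Coefficients.

Section Ideal.
Variable K : fieldType.
Implicit Types (q c : K) (x y : kQ K) (w : Defs.path).

Definition ideal_gen q (t : K * Defs.path * bool * Defs.path) : kQ K :=
  kQscale t.1.1.1 (kQmul (kQmul (kQpath K t.1.1.2) (Defs.rel q t.1.2)) (kQpath K t.2)).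

Lemma eq_in_ideal q x y : coef x =1 coef y -> in_ideal q x -> in_ideal q y.
Proof. by move=> xy [s hs]; exists s => w; rewrite -xy. Qed.

Lemma in_ideal_coef0 q x : coef x =1 (fun _ => 0) -> in_ideal q x.
Proof. by move=> x0; exists [::] => w; rewrite x0 coef_nil. Qed.

Lemma in_ideal_cat q x y : in_ideal q x -> in_ideal q y -> in_ideal q (x ++ y).
Proof.
move=> [s hs] [s' hs']; exists (s ++ s') => w.
by rewrite /kQsum map_cat flatten_cat !coef_cat hs hs'.
Qed.

Lemma in_ideal_kQscale q c x : in_ideal q x -> in_ideal q (kQscale c x).
Proof.
move=> [s hs]; exists [seq (c * t.1.1.1, t.1.1.2, t.1.2, t.2) | t <- s] => w.
rewrite coef_kQscale hs !coef_kQsum -map_comp !big_map mulr_sumr.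
by apply: eq_bigr => t _; rewrite /= !coef_kQscale mulrA.
Qed.

Lemma eqA_ext q x y : coef x =1 coef y -> eqA q x y.
Proof. by move=> xy; apply: in_ideal_coef0 => w; rewrite coef_kQsub xy subrr. Qed.

Lemma eqA_sym q x y : eqA q x y -> eqA q y x.
Proof.
move/(in_ideal_kQscale (-1)); apply: eq_in_ideal => w.
by rewrite coef_kQscale !coef_kQsub mulN1r opprB.
Qed.

Lemma eqA_trans q x y z : eqA q x y -> eqA q y z -> eqA q x z.
Proof.
move=> xy yz; apply: eq_in_ideal (in_ideal_cat xy yz) => w.
by rewrite coef_cat !coef_kQsub addrA subrK.
Qed.

Lemma eqA_kQadd q x x' y y' :
  eqA q x x' -> eqA q y y' -> eqA q (kQadd x y) (kQadd x' y').
Proof.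
move=> xx' yy'; apply: eq_in_ideal (in_ideal_cat xx' yy') => w.
rewrite coef_cat !coef_kQsub !coef_cat; ring.
Qed.

Lemma eqA_kQscale q c x y : eqA q x y -> eqA q (kQscale c x) (kQscale c y).
Proof.
move/(in_ideal_kQscale c); apply: eq_in_ideal => w.
by rewrite !coef_kQsub !coef_kQscale coef_kQsub mulrBr.
Qed.

Lemma homog_len_ideal_gen q t :
  homog_len (plen t.1.1.2 + 2 + plen t.2) (ideal_gen q t).
Proof.
apply/homog_len_kQscale/homog_len_kQmul; last by rewrite /homog_len /= eqxx.
by apply: homog_len_kQmul; [rewrite /homog_len /= eqxx | case: t.1.2].
Qed.

Lemma in_ideal_coef_short q x w : in_ideal q x -> (plen w < 2)%N -> coef x w = 0.
Proof.
move=> [s ->] hw; rewrite coef_kQsum big_map big1 // => t _.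
by apply: coef_homog_len (homog_len_ideal_gen q t) _; apply/eqP; lia.
Qed.

Lemma eqA_coef_short q x y w : eqA q x y -> (plen w < 2)%N -> coef x w = coef y w.
Proof. by move=> xy /(in_ideal_coef_short xy) /eqP; rewrite coef_kQsub subr_eq0 => /eqP. Qed.

(* The linear forms that vanish on the degree-2 part of the ideal, which is spanned
   by ab - cd and ba - q dc: at e1 the coefficients of ad, cb and ab + cd, at e2
   those of bc, da and q ba + dc. *)
Definition deg2_rel q (f : Defs.path -> K) : Prop :=
  forall u : bool, [/\ f (u, [:: false; true]) = 0, f (u, [:: true; false]) = 0 &
    (if u then q else 1) * f (u, [:: false; false]) + f (u, [:: true; true]) = 0].

Lemma deg2_rel_cat q x y :
  deg2_rel q (coef x) -> deg2_rel q (coef y) -> deg2_rel q (coef (x ++ y)).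
Proof.
move=> hx hy u; have [x1 x2 x3] := hx u; have [y1 y2 y3] := hy u.
by split; rewrite !coef_cat ?mulrDr 1?addrACA ?x1 ?x2 ?x3 ?y1 ?y2 ?y3 ?addr0.
Qed.

Lemma deg2_rel_homog_len q x n : homog_len n x -> n != 2 -> deg2_rel q (coef x).
Proof.
move=> hx n2 u; have x0 w : plen w = 2 -> coef x w = 0.
  by move=> hw; apply: coef_homog_len hx _; rewrite hw eq_sym.
by split; rewrite ?x0 ?mulr0 ?addr0.
Qed.

Lemma deg2_rel_ideal_gen q t : deg2_rel q (coef (ideal_gen q t)).
Proof.
case: t => [[[c [v [|e vl]]] i] [v' [|e' vl']]];
  try by apply: deg2_rel_homog_len (homog_len_ideal_gen q _) _; rewrite /plen /=; lia.
move=> u; case: v v' i u => [] [] [] [];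
  by rewrite /ideal_gen !coef_kQscale /kQmul /= ?coef_cons_pair ?coef_nil /=; split; ring.
Qed.

Lemma in_ideal_deg2_rel q x : in_ideal q x -> deg2_rel q (coef x).
Proof.
move=> [s hs] u; rewrite !hs; elim: s {hs} u => [|t s IH] u.
  by split; rewrite /= !coef_nil ?mulr0 ?addr0.
exact: deg2_rel_cat (deg2_rel_ideal_gen q t) IH u.
Qed.

End Ideal.

Lemma eqA_rel (K : fieldType) (q : K) (u : bool) :
  eqA q (kQmul (kQpath K (u, [:: false])) (kQpath K (~~ u, [:: false])))
        (kQscale (if u then q else 1)
                 (kQmul (kQpath K (u, [:: true])) (kQpath K (~~ u, [:: true])))).
Proof.
exists [:: (1, vtx u, u, vtx u)] => w.
by case: u; rewrite /= !coef_cons_pair !coef_nil /=; ring.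
Qed.

Section ArrowCombinations.
Variable K : fieldType.
Implicit Types (p k : K) (x y : kQ K).

Definition arrow_comb (u : bool) k k' : kQ K :=
  kQadd (kQscale k (kQpath K (u, [:: false]))) (kQscale k' (kQpath K (u, [:: true]))).

Lemma coef_arrow_comb u k k' w : coef (arrow_comb u k k') w =
  k * ((u, [:: false]) == w)%:R + k' * ((u, [:: true]) == w)%:R.
Proof. by rewrite coef_cat !coef_kQscale !coef_kQpath. Qed.

Lemma homog_arrow u e : homog 1 u (~~ u) (kQpath K (u, [:: e])).
Proof. by rewrite /homog /= /ptgt addbT !eqxx. Qed.

Lemma homog1_arrow_comb u v y : homog 1 u v y ->
  coef y =1 coef (arrow_comb u (coef y (u, [:: false])) (coef y (u, [:: true]))).
Proof.
move=> hy [u' l]; rewrite coef_arrow_comb !xpair_eqE.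
case: l => [|e [|e' l]]; rewrite /= ?eqseq_cons ?andbF ?mulr0 ?addr0;
  try by rewrite (coef_homog hy).
have [<- | u'u] := eqVneq u u'; last first.
  rewrite /= !mulr0 addr0 (coef_homog hy) //.
  by rewrite /psrc /= (eq_sym u') (negbTE u'u).
by case: e; rewrite /= ?mulr0 ?mulr1 ?addr0 ?add0r.
Qed.

Lemma eqA_arrow_comb_coef p x u k k' : eqA p x (arrow_comb u k k') ->
  [/\ forall v, coef x (v, [::]) = 0, coef x (u, [:: false]) = k
    & coef x (u, [:: true]) = k'].
Proof.
move=> xk; split=> [v||]; rewrite (eqA_coef_short xk) // coef_arrow_comb !xpair_eqE /=.
- by rewrite !andbF mulr0 mulr0 addr0.
- by rewrite eqxx mulr1 mulr0 addr0.
- by rewrite eqxx mulr1 mulr0 add0r.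
Qed.

Lemma eqA_arrow_comb_mul p u r x y x' y' k1 k2 k3 k4 l1 l2 l3 l4 :
  eqA p x (arrow_comb u k1 k2) -> eqA p y (arrow_comb (~~ u) l1 l2) ->
  eqA p x' (arrow_comb u k3 k4) -> eqA p y' (arrow_comb (~~ u) l3 l4) ->
  eqA p (kQmul x y) (kQscale r (kQmul x' y')) ->
  [/\ k1 * l2 = r * (k3 * l4), k2 * l1 = r * (k4 * l3) &
      (if u then p else 1) * (k1 * l1 - r * (k3 * l3)) + (k2 * l2 - r * (k4 * l4)) = 0].
Proof.
move=> /eqA_arrow_comb_coef [x0 x1 x2] /eqA_arrow_comb_coef [y0 y1 y2].
move=> /eqA_arrow_comb_coef [x0' x1' x2'] /eqA_arrow_comb_coef [y0' y1' y2'].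
move=> /in_ideal_deg2_rel /(_ u) [].
rewrite !coef_kQsub !coef_kQscale !coef_kQmul_len2 x0 y0 x0' y0' x1 x2 y1 y2 x1' x2' y1' y2'.
rewrite !mul0r !mulr0 !add0r !addr0 => e1 e2 e3.
by split; [apply/eqP; rewrite -subr_eq0 e1 | apply/eqP; rewrite -subr_eq0 e2 | ].
Qed.

End ArrowCombinations.

Section TypeIGradedIso.
Variables (K : fieldType) (q p : K) (Phi : kQ K -> kQ K).
Hypotheses (hPhi : is_graded_iso q p Phi) (hI : type_I p Phi).

Lemma Phi_eqA x y : eqA q x y -> eqA p (Phi x) (Phi y).
Proof. by case: hPhi => -[resp _] _; apply: resp. Qed.

Lemma Phi_kQadd x y : eqA p (Phi (kQadd x y)) (kQadd (Phi x) (Phi y)).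
Proof. by case: hPhi => -[_ [add _ _ _ _]]. Qed.

Lemma Phi_kQscale c x : eqA p (Phi (kQscale c x)) (kQscale c (Phi x)).
Proof. by case: hPhi => -[_ [_ scale _ _ _]]. Qed.

Lemma Phi_kQmul x y : eqA p (Phi (kQmul x y)) (kQmul (Phi x) (Phi y)).
Proof. by case: hPhi => -[_ [_ _ mul _ _]]. Qed.

Lemma type_I_homog k u v :
  (forall x, homog k u v x -> exists y, homog k u v y /\ eqA p (Phi x) y) /\
  (forall y, homog k u v y -> exists x, homog k u v x /\ eqA p (Phi x) y).
Proof.
case: hPhi => _ [sigma [sigma_bij sigma_homog]].
(* The ideal has no degree-0 part and Phi fixes e1, so sigma cannot swap the vertices. *)
suff sigma_id : sigma =1 id by have := sigma_homog k u v; rewrite !sigma_id.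
have sigma0 : sigma false = false.
  apply/negbTE/negP => sigma0.
  have [y [hy Phi_e1]] := (sigma_homog 0%N false false).1 (kQpath K (vtx false)) isT.
  have := eqA_coef_short (eqA_trans (eqA_sym hI.1) Phi_e1) (w := vtx false) isT.
  rewrite coef_kQpath eqxx (coef_homog hy) ?sigma0 // => /eqP; exact/negP/oner_neq0.
have sigma1 : sigma true = true.
  by case E: (sigma true) => //; have := bij_inj sigma_bij (etrans E (esym sigma0)).
by case.
Qed.

Lemma type_I_arrow_image u e :
  exists k k', eqA p (Phi (kQpath K (u, [:: e]))) (arrow_comb u k k').
Proof.
have [y [hy Phi_y]] := (type_I_homog 1 u (~~ u)).1 _ (homog_arrow K u e).
exists (coef y (u, [:: false])), (coef y (u, [:: true])).
exact: eqA_trans Phi_y (eqA_ext p (homog1_arrow_comb hy)).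
Qed.

Lemma Phi_homog1 u v x : homog 1 u v x ->
  eqA p (Phi x) (kQadd (kQscale (coef x (u, [:: false])) (Phi (kQpath K (u, [:: false]))))
                       (kQscale (coef x (u, [:: true])) (Phi (kQpath K (u, [:: true]))))).
Proof.
move=> hx; apply: eqA_trans (Phi_eqA (eqA_ext q (homog1_arrow_comb hx))) _.
by apply: eqA_trans (Phi_kQadd _ _) _; apply: eqA_kQadd; apply: Phi_kQscale.
Qed.

Lemma type_I_arrow_det u k1 k2 k3 k4 :
  eqA p (Phi (kQpath K (u, [:: false]))) (arrow_comb u k1 k2) ->
  eqA p (Phi (kQpath K (u, [:: true]))) (arrow_comb u k3 k4) ->
  k1 * k4 - k2 * k3 != 0.
Proof.
move=> Phi_a Phi_c.
have arrow_span e : exists al be, al * k1 + be * k3 = (~~ e)%:R /\ al * k2 + be * k4 = e%:R.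
  have [x [hx Phi_x]] := (type_I_homog 1 u (~~ u)).2 _ (homog_arrow K u e).
  exists (coef x (u, [:: false])), (coef x (u, [:: true])).
  have E := eqA_trans (eqA_sym Phi_x) (eqA_trans (Phi_homog1 hx)
              (eqA_kQadd (eqA_kQscale _ Phi_a) (eqA_kQscale _ Phi_c))).
  have := eqA_coef_short E (w := (u, [:: false])) isT.
  have := eqA_coef_short E (w := (u, [:: true])) isT.
  rewrite !coef_cat !coef_kQscale !coef_arrow_comb !coef_kQpath !xpair_eqE !eqxx /=.
  by case: e {Phi_x E}; rewrite /= !mulr0 !mulr1 !add0r !addr0 => <- <-.
have [al [be [a1 a2]]] := arrow_span false.
have [al' [be' [c1 c2]]] := arrow_span true.
apply/eqP => det0.
have : (al * k1 + be * k3) * (al' * k2 + be' * k4) - (al * k2 + be * k4) * (al' * k1 + be' * k3)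
       = (al * be' - be * al') * (k1 * k4 - k2 * k3) by ring.
by rewrite det0 mulr0 a1 a2 c1 c2 /= mulr1n mulr0n mul1r mul0r subr0; apply/eqP/oner_neq0.
Qed.

Lemma Phi_rel u :
  eqA p (kQmul (Phi (kQpath K (u, [:: false]))) (Phi (kQpath K (~~ u, [:: false]))))
        (kQscale (if u then q else 1)
                 (kQmul (Phi (kQpath K (u, [:: true]))) (Phi (kQpath K (~~ u, [:: true]))))).
Proof.
apply: eqA_trans (eqA_sym (Phi_kQmul _ _)) _.
apply: eqA_trans (Phi_eqA (eqA_rel q u)) _.
exact: eqA_trans (Phi_kQscale _ _) (eqA_kQscale _ (Phi_kQmul _ _)).
Qed.

End TypeIGradedIso.

Lemma arrow_relations_eq (F : fieldType) (p q k1 k2 k3 k4 l1 l2 l3 l4 : F) :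
  q != 1 -> l1 * l4 - l2 * l3 != 0 -> k1 != 0 -> k4 != 0 ->
  k1 * l2 = k3 * l4 -> k2 * l1 = k4 * l3 -> k1 * l1 - k3 * l3 + (k2 * l2 - k4 * l4) = 0 ->
  l1 * k2 = q * (l3 * k4) -> l2 * k1 = q * (l4 * k3) ->
  p * (l1 * k1 - q * (l3 * k3)) + (l2 * k2 - q * (l4 * k4)) = 0 ->
  p = q.
Proof.
move=> q1 det_l k1n k4n e1 e2 e3 f1 f2 f3.
have cancel0 (a b : F) : a != 0 -> a * b = 0 -> b = 0.
  by move=> a0 /eqP; rewrite mulf_eq0 (negbTE a0) => /eqP.
have q1' : 1 - q != 0 by rewrite subr_eq0 eq_sym.
have k3l4 : k3 * l4 = 0.
  apply: cancel0 q1' _; transitivity ((l2 * k1 - q * (l4 * k3)) - (k1 * l2 - k3 * l4)).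
    by ring.
  by rewrite f2 e1 !subrr.
have k4l3 : k4 * l3 = 0.
  apply: cancel0 q1' _; transitivity ((l1 * k2 - q * (l3 * k4)) - (k2 * l1 - k4 * l3)).
    by ring.
  by rewrite f1 e2 !subrr.
have l2_0 : l2 = 0 by apply: cancel0 k1n _; rewrite e1 k3l4.
have l3_0 : l3 = 0 by apply: cancel0 k4n _.
move: det_l; rewrite l2_0 l3_0 mul0r subr0 mulf_eq0 negb_or => /andP [l1n l4n].
have k3_0 : k3 = 0 by apply: cancel0 l4n _; rewrite mulrC.
have k2_0 : k2 = 0 by apply: cancel0 l1n _; rewrite mulrC e2.
apply/eqP; rewrite -subr_eq0; apply/eqP/(cancel0 (k1 * l1)); first by rewrite mulf_neq0.
transitivity (p * (l1 * k1 - q * (l3 * k3)) + (l2 * k2 - q * (l4 * k4))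
              - q * (k1 * l1 - k3 * l3 + (k2 * l2 - k4 * l4))).
  by rewrite l2_0 l3_0 k2_0 k3_0; ring.
by rewrite f3 e3 mulr0 subr0.
Qed.

Theorem lemma3p6 (K : closedFieldType) (hchar : [pchar K] =i pred0)
  (p q : K) (hp : p != 0) (hq : q != 0) (hq1 : q != 1)
  (Phi : kQ K -> kQ K)
  (hPhi : is_graded_iso q p Phi) (hI : type_I p Phi) :
  exists k1 k2 k3 k4 l1 l2 l3 l4 : K,
    ( k1 * k4 - k2 * k3 != 0 /\ l1 * l4 - l2 * l3 != 0 /\
        eqA p (Phi (kQpath K arr_a))
              (kQadd (kQscale k1 (kQpath K arr_a)) (kQscale k2 (kQpath K arr_c))) /\
        eqA p (Phi (kQpath K arr_b))
              (kQadd (kQscale l1 (kQpath K arr_b)) (kQscale l2 (kQpath K arr_d))) /\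
        eqA p (Phi (kQpath K arr_c))
              (kQadd (kQscale k3 (kQpath K arr_a)) (kQscale k4 (kQpath K arr_c))) /\
        eqA p (Phi (kQpath K arr_d))
              (kQadd (kQscale l3 (kQpath K arr_b)) (kQscale l4 (kQpath K arr_d))) /\
        (k1 != 0 -> k4 != 0 -> p = q)).
Proof.
have [k1 [k2 Phi_a]] := type_I_arrow_image hPhi hI false false.
have [k3 [k4 Phi_c]] := type_I_arrow_image hPhi hI false true.
have [l1 [l2 Phi_b]] := type_I_arrow_image hPhi hI true false.
have [l3 [l4 Phi_d]] := type_I_arrow_image hPhi hI true true.
have det_k := type_I_arrow_det hPhi hI Phi_a Phi_c.
have det_l := type_I_arrow_det hPhi hI Phi_b Phi_d.
exists k1, k2, k3, k4, l1, l2, l3, l4.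
do 6 (split; first by []).
move=> k1n k4n.
have [e1 e2 e3] := eqA_arrow_comb_mul Phi_a Phi_b Phi_c Phi_d (Phi_rel hPhi false).
have [f1 f2 f3] := eqA_arrow_comb_mul Phi_b Phi_a Phi_d Phi_c (Phi_rel hPhi true).
rewrite /= !mul1r in e1 e2 e3 f1 f2 f3.
exact: arrow_relations_eq hq1 det_l k1n k4n e1 e2 e3 f1 f2 f3.
Qed.
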